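(* For an object $M$ of an abelian category, the following four conditions are equivalent: (P1 left) for every $m\ge0$ and every subobject $N'\subseteq M^m$ there are $k,l\ge0$ and morphisms $\alpha:M^k\to M^m$, $\beta:M^k\to M^l$ with $N'=\alpha(\ker\beta)$; (P2 left) every subobject $N'\subseteq M^n$ (any $n$) lies in the smallest class $\mathcal{C}$ of subobjects of the powers $M^m$ ($m$ varying) such that (a) $0\subseteq M^m$ and $M^m\subseteq M^m$ lie in $\mathcal{C}$ for all $m$; (b) if $N'\subseteq M^m$ lies in $\mathcal{C}$ and $\varphi:M^m\to M^k$ then $\varphi(N')\subseteq M^k$ lies in $\mathcal{C}$; (c) if $N'\subseteq M^k$ lies in $\mathcal{C}$ and $\varphi:M^m\to M^k$ then $\varphi^{-1}(N')\subseteq M^m$ lies in $\mathcal{C}$; (P1 right) for every $m\ge0$ and every quotient $q:M^m\twoheadrightarrow N$ there are $k,l\ge0$ and morphisms $\alpha:M^m\to M^k$, $\beta:M^l\to M^k$ such that $\ker q=\ker(\pi_\beta\circ\alpha)$, where $\pi_\beta:M^k\to\operatorname{coker}\beta$ is the projection; (P2 right) every quotient of a power $M^n$ lies in the smallest class $\mathcal{C}'$ of quotients of powers $M^m$ such that (a) $M^m\twoheadrightarrow0$ and $\mathrm{id}:M^m\to M^m$ lie in $\mathcal{C}'$; (b) if $M^k\twoheadrightarrow N$ lies in $\mathcal{C}'$ and $\varphi:M^m\to M^k$, then the quotient of $M^m$ given by the image of the composite $M^m\to M^k\to N$ lies in $\mathcal{C}'$; (c) if $M^m\twoheadrightarrow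 N$ lies in $\mathcal{C}'$ and $\varphi:M^m\to M^k$, then $M^k\twoheadrightarrow M^k\sqcup_{M^m}N$ (pushout) lies in $\mathcal{C}'$.
   Context: An object satisfying these equivalent conditions is called principal. Quotients are considered up to isomorphism under the source, i.e. determined by their kernels. *)

From HB Require Import structures.
From mathcomp Require Import all_boot all_algebra.
Set Implicit Arguments. Unset Strict Implicit. Unset Printing Implicit Defensive.
Import GRing.Theory.
Local Open Scope ring_scope.

Record AbCat := {
  Ob : Type;
  Hom : Ob -> Ob -> zmodType;
  comp : forall A B C : Ob, Hom B C -> Hom A B -> Hom A C;
  idm : forall A : Ob, Hom A A;
  compA : forall A B C D (h : Hom C D) (g : Hom B C) (f : Hom A B),
      comp h (comp g f) = comp (comp h g) f;
  comp1m : forall A B (f : Hom A B), comp (idm B) f = f;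
  compm1 : forall A B (f : Hom A B), comp f (idm A) = f;
  compDl : forall A B C (g1 g2 : Hom B C) (f : Hom A B),
      comp (g1 + g2) f = comp g1 f + comp g2 f;
  compDr : forall A B C (g : Hom B C) (f1 f2 : Hom A B),
      comp g (f1 + f2) = comp g f1 + comp g f2;
  zob : Ob;
  zob_init : forall A (f g : Hom zob A), f = g;
  zob_term : forall A (f g : Hom A zob), f = g;
  bip : Ob -> Ob -> Ob;
  bin1 : forall A B, Hom A (bip A B);
  bin2 : forall A B, Hom B (bip A B);
  bpr1 : forall A B, Hom (bip A B) A;
  bpr2 : forall A B, Hom (bip A B) B;
  bip11 : forall A B, comp (bpr1 A B) (bin1 A B) = idm A;
  bip22 : forall A B, comp (bpr2 A B) (bin2 A B) = idm B;
  bip12 : forall A B, comp (bpr1 A B) (bin2 A B) = 0;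
  bip21 : forall A B, comp (bpr2 A B) (bin1 A B) = 0;
  bipid : forall A B, comp (bin1 A B) (bpr1 A B) + comp (bin2 A B) (bpr2 A B)
                      = idm (bip A B);
  kerob : forall A B, Hom A B -> Ob;
  kmap : forall A B (f : Hom A B), Hom (kerob f) A;
  kmap0 : forall A B (f : Hom A B), comp f (kmap f) = 0;
  kmapU : forall A B (f : Hom A B) X (g : Hom X A), comp f g = 0 ->
      exists! h : Hom X (kerob f), comp (kmap f) h = g;
  cokob : forall A B, Hom A B -> Ob;
  ckmap : forall A B (f : Hom A B), Hom B (cokob f);
  ckmap0 : forall A B (f : Hom A B), comp (ckmap f) f = 0;
  ckmapU : forall A B (f : Hom A B) X (g : Hom B X), comp g f = 0 ->
      exists! h : Hom (cokob f) X, comp h (ckmap f) = g;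
  (* every mono is a kernel of its cokernel *)
  mono_normal : forall A B (f : Hom A B),
      (forall X (g h : Hom X A), comp f g = comp f h -> g = h) ->
      forall X (g : Hom X B), comp (ckmap f) g = 0 ->
      exists h : Hom X A, comp f h = g;
  (* every epi is a cokernel of its kernel *)
  epi_normal : forall A B (f : Hom A B),
      (forall X (g h : Hom B X), comp g f = comp h f -> g = h) ->
      forall X (g : Hom A X), comp g (kmap f) = 0 ->
      exists h : Hom B X, comp h f = g
}.

Arguments Hom : clear implicits.
Arguments comp {a A B C}.
Arguments idm {a}.
Arguments zob {a}.
Arguments bip {a}.
Arguments bin1 {a A B}.
Arguments bin2 {a A B}.
Arguments bpr1 {a A B}.
Arguments bpr2 {a A B}.
Arguments kerob {a A B}.
Arguments kmap {a A B}.
Arguments cokob {a A B}.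
Arguments ckmap {a A B}.

Section Derived.
Variable C : AbCat.
Local Notation Ob := (Ob C).
Local Notation Hom := (Hom C).

Definition mono A B (f : Hom A B) :=
  forall X (g h : Hom X A), comp f g = comp f h -> g = h.
Definition epi A B (f : Hom A B) :=
  forall X (g h : Hom B X), comp g f = comp h f -> g = h.

Fixpoint pow (M : Ob) (n : nat) : Ob :=
  match n with 0%N => zob | n'.+1 => bip M (pow M n') end.

Definition suble X S T (i : Hom S X) (j : Hom T X) :=
  exists f : Hom S T, comp j f = i.
Definition subeq X S T (i : Hom S X) (j : Hom T X) :=
  suble i j /\ suble j i.

Definition imob X Y (g : Hom Y X) := kerob (ckmap g).
Definition immap X Y (g : Hom Y X) : Hom (imob g) X := kmap (ckmap g).

Definition dimob X Y S (phi : Hom X Y) (i : Hom S X) := imob (comp phi i).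
Definition dimmap X Y S (phi : Hom X Y) (i : Hom S X) := immap (comp phi i).

(* inverse image phi^-1(N') of the subobject i : S >-> Y under phi : X -> Y:
   the kernel of X -> Y -> coker i  (i is a kernel of its cokernel). *)
Definition invob X Y S (phi : Hom X Y) (i : Hom S Y) := kerob (comp (ckmap i) phi).
Definition invmap X Y S (phi : Hom X Y) (i : Hom S Y) := kmap (comp (ckmap i) phi).

Definition quoteq X N N' (q : Hom X N) (q' : Hom X N') := subeq (kmap q) (kmap q').

(* the quotient of X given by (the image of) g : X -> Y: the coimage
   X ->> coker (ker g), which has the same kernel as X ->> im g *)
Definition coimob X Y (g : Hom X Y) := cokob (kmap g).
Definition coimmap X Y (g : Hom X Y) : Hom X (coimob g) := ckmap (kmap g).

(* pushout of q : X ->> N along phi : X -> Y, constructed as the cokernel of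
   <phi, -q> : X -> Y (+) N; the map Y -> Y \sqcup_X N. *)
Definition poob X Y N (phi : Hom X Y) (q : Hom X N) :=
  cokob (comp bin1 phi - comp bin2 q : Hom X (bip Y N)).
Definition pomap X Y N (phi : Hom X Y) (q : Hom X N) : Hom Y (poob phi q) :=
  comp (ckmap (comp bin1 phi - comp bin2 q : Hom X (bip Y N))) bin1.

Variable M : Ob.

Definition P1_left :=
  forall (m : nat) (S : Ob) (i : Hom S (pow M m)), mono i ->
  exists (k l : nat) (alpha : Hom (pow M k) (pow M m)) (beta : Hom (pow M k) (pow M l)),
    subeq i (dimmap alpha (kmap beta)).

Inductive classC : forall (m : nat) (S : Ob), Hom S (pow M m) -> Prop :=
  | classC_zero m : classC (0 : Hom zob (pow M m))
  | classC_top m : classC (idm (pow M m))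
  | classC_img m k S (i : Hom S (pow M m)) (phi : Hom (pow M m) (pow M k)) :
      classC i -> classC (dimmap phi i)
  | classC_inv m k S (i : Hom S (pow M k)) (phi : Hom (pow M m) (pow M k)) :
      classC i -> classC (invmap phi i).

Definition P2_left :=
  forall (n : nat) (S : Ob) (i : Hom S (pow M n)), mono i ->
  exists (S' : Ob) (i' : Hom S' (pow M n)), classC i' /\ subeq i i'.

Definition P1_right :=
  forall (m : nat) (N : Ob) (q : Hom (pow M m) N), epi q ->
  exists (k l : nat) (alpha : Hom (pow M m) (pow M k)) (beta : Hom (pow M l) (pow M k)),
    subeq (kmap q) (kmap (comp (ckmap beta) alpha)).

Inductive classC' : forall (m : nat) (N : Ob), Hom (pow M m) N -> Prop :=
  | classC'_zero m : classC' (0 : Hom (pow M m) zob)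
  | classC'_id m : classC' (idm (pow M m))
  | classC'_comp m k N (q : Hom (pow M k) N) (phi : Hom (pow M m) (pow M k)) :
      classC' q -> classC' (coimmap (comp q phi))
  | classC'_po m k N (q : Hom (pow M m) N) (phi : Hom (pow M m) (pow M k)) :
      classC' q -> classC' (pomap phi q).

Definition P2_right :=
  forall (n : nat) (N : Ob) (q : Hom (pow M n) N), epi q ->
  exists (N' : Ob) (q' : Hom (pow M n) N'), classC' q' /\ quoteq q q'.

End Derived.

From HB Require Import structures.
From mathcomp Require Import all_boot all_algebra.
Set Implicit Arguments. Unset Strict Implicit. Unset Printing Implicit Defensive.
Import GRing.Theory.
Local Open Scope ring_scope.

(* - (P1 left) <-> (P2 left): a subobject of the form alpha(ker beta) is built
     from 0 by one inverse image and one direct image, so it lies in the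
     class C; conversely every member of C has this form, since the form is
     preserved by direct images (trivially) and by inverse images
     (phi^-1(alpha(ker beta)) = pr1(ker gamma) for a block matrix gamma, the
     resulting direct sums being moved back to powers of M by retractions).
   - (P2 left) and (P2 right) both say that every quotient of a power of M
     has its kernel in C (a subobject being the kernel of its cokernel):
     up to equality of kernels, the members of C' are exactly the quotients
     with kernel in C, because the kernels of the two constructions of C'
     are the inverse image, resp. the direct image, of the kernel.
   - The right-hand conditions are the left-hand ones in the opposite
     category opC: (P1 right) is literally (P1 left) there, and (P2 left) in
     opC again says that every quotient of a power has its kernel in C.
   Hence (P1 right) <-> (P1 left in opC) <-> (P2 left in opC) <-> (P2 left). *)

Section Additive.
Variable C : AbCat.
Local Notation Hom := (Hom C).

Lemma comp0r A B D (g : Hom B D) : comp g (0 : Hom A B) = 0.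
Proof. by apply: (addrI (comp g 0)); rewrite addr0 -compDr addr0. Qed.

Lemma compNr A B D (g : Hom B D) (f : Hom A B) : comp g (- f) = - comp g f.
Proof. by apply: (addrI (comp g f)); rewrite -compDr !subrr comp0r. Qed.

Lemma compBr A B D (g : Hom B D) (f1 f2 : Hom A B) :
  comp g (f1 - f2) = comp g f1 - comp g f2.
Proof. by rewrite compDr compNr. Qed.

Lemma monoP A B (f : Hom A B) :
  mono f <-> (forall X (g : Hom X A), comp f g = 0 -> g = 0).
Proof.
split=> [mf X g fg0 | H X g h fgh]; first by apply: mf; rewrite fg0; symmetry; apply: comp0r.
by apply/eqP; rewrite -subr_eq0; apply/eqP/H; rewrite compBr fgh subrr.
Qed.

Lemma kmap_lift A B (f : Hom A B) X (g : Hom X A) :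
  comp f g = 0 -> exists h : Hom X (kerob f), comp (kmap f) h = g.
Proof. by case/kmapU=> h [fh _]; exists h. Qed.

Lemma kmap_mono A B (f : Hom A B) : mono (kmap f).
Proof.
apply/monoP=> X g kg0.
have fkg : comp f (comp (kmap f) g) = 0 by rewrite kg0 comp0r.
case: (kmapU fkg) => u [_ uniq_u].
by rewrite -(uniq_u g erefl) (uniq_u 0); rewrite // comp0r kg0.
Qed.

Lemma mono_comp A B D (g : Hom B D) (f : Hom A B) :
  mono g -> mono f -> mono (comp g f).
Proof. by move=> mg mf X u v; rewrite -!compA => /mg; apply: mf. Qed.

Lemma bip_ext_into A B Z (f g : Hom Z (bip A B)) :
  comp bpr1 f = comp bpr1 g -> comp bpr2 f = comp bpr2 g -> f = g.
Proof.
by move=> e1 e2; rewrite -[f]comp1m -[g]comp1m -bipid !compDl -!compA e1 e2.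
Qed.

End Additive.

Definition opC (C : AbCat) : AbCat.
refine {| Ob := Ob C; Hom := fun A B => Hom C B A;
  comp := fun A B D h g => comp g h; idm := fun A => idm A;
  zob := zob; bip := fun A B => bip A B;
  bin1 := fun A B => bpr1; bin2 := fun A B => bpr2;
  bpr1 := fun A B => bin1; bpr2 := fun A B => bin2;
  kerob := fun A B f => cokob f; kmap := fun A B f => ckmap f;
  cokob := fun A B f => kerob f; ckmap := fun A B f => kmap f |}.
- by move=> *; rewrite compA.
- by move=> *; apply: compm1.
- by move=> *; apply: comp1m.
- by move=> *; rewrite compDr.
- by move=> *; rewrite compDl.
- by move=> *; apply: zob_term.
- by move=> *; apply: zob_init.
- by move=> *; apply: bip11.
- by move=> *; apply: bip22.
- by move=> *; apply: bip21.
- by move=> *; apply: bip12.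
- by move=> *; apply: bipid.
- by move=> *; apply: ckmap0.
- by move=> A B f X g; apply: ckmapU.
- by move=> *; apply: kmap0.
- by move=> A B f X g; apply: kmapU.
- by move=> A B f mf X g; apply: epi_normal.
- by move=> A B f mf X g; apply: mono_normal.
Defined.

Section Duals.
Variable C : AbCat.
Local Notation Hom := (Hom C).

Lemma comp0l A B D (f : Hom A B) : comp (0 : Hom B D) f = 0.
Proof. exact: (comp0r (C:=opC C)). Qed.

Lemma compNl A B D (g : Hom B D) (f : Hom A B) : comp (- g) f = - comp g f.
Proof. exact: (compNr (C:=opC C)). Qed.

Lemma compBl A B D (g1 g2 : Hom B D) (f : Hom A B) :
  comp (g1 - g2) f = comp g1 f - comp g2 f.
Proof. exact: (compBr (C:=opC C)). Qed.

Lemma epiP A B (f : Hom A B) :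
  epi f <-> (forall X (g : Hom B X), comp g f = 0 -> g = 0).
Proof. exact: (monoP (C:=opC C)). Qed.

Lemma ckmap_desc A B (f : Hom A B) X (g : Hom B X) :
  comp g f = 0 -> exists h : Hom (cokob f) X, comp h (ckmap f) = g.
Proof. exact: (kmap_lift (C:=opC C)). Qed.

Lemma ckmap_epi A B (f : Hom A B) : epi (ckmap f).
Proof. exact: (kmap_mono (C:=opC C)). Qed.

Lemma bip_ext_from A B Z (f g : Hom (bip A B) Z) :
  comp f bin1 = comp g bin1 -> comp f bin2 = comp g bin2 -> f = g.
Proof. exact: (bip_ext_into (C:=opC C)). Qed.

End Duals.

Section Biproducts.
Variable C : AbCat.
Local Notation Hom := (Hom C).

Lemma bip11c A B X (h : Hom A X) : comp (comp h (@bpr1 C A B)) bin1 = h.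
Proof. by rewrite -compA bip11 compm1. Qed.
Lemma bip22c A B X (h : Hom B X) : comp (comp h (@bpr2 C A B)) bin2 = h.
Proof. by rewrite -compA bip22 compm1. Qed.
Lemma bip12c A B X (h : Hom A X) : comp (comp h (@bpr1 C A B)) bin2 = 0.
Proof. by rewrite -compA bip12 comp0r. Qed.
Lemma bip21c A B X (h : Hom B X) : comp (comp h (@bpr2 C A B)) bin1 = 0.
Proof. by rewrite -compA bip21 comp0r. Qed.

End Biproducts.

Ltac hom_simp := repeat progress rewrite ?compDl ?compDr ?compNl ?compNr
  ?comp0l ?comp0r ?compA ?bip11c ?bip22c ?bip12c ?bip21c ?bip11 ?bip22 ?bip12
  ?bip21 ?comp1m ?compm1 ?addr0 ?add0r ?subr0 ?sub0r ?oppr0 ?opprK.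

Section Subobjects.
Variable C : AbCat.
Local Notation Hom := (Hom C).

Lemma suble_refl X S (i : Hom S X) : suble i i.
Proof. by exists (idm S); rewrite compm1. Qed.

Lemma suble_trans X S T U (i : Hom S X) (j : Hom T X) (k : Hom U X) :
  suble i j -> suble j k -> suble i k.
Proof. by case=> f <- [g <-]; exists (comp g f); rewrite compA. Qed.

Lemma subeq_sym X S T (i : Hom S X) (j : Hom T X) : subeq i j -> subeq j i.
Proof. by case. Qed.

Lemma subeq_trans X S T U (i : Hom S X) (j : Hom T X) (k : Hom U X) :
  subeq i j -> subeq j k -> subeq i k.
Proof. by case=> ij ji [jk kj]; split; apply: suble_trans; eassumption. Qed.

Lemma suble_comp X Y S T (phi : Hom X Y) (i : Hom S X) (j : Hom T X) :
  suble i j -> suble (comp phi i) (comp phi j).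
Proof. by case=> f <-; exists f; rewrite compA. Qed.

Lemma subeq_comp X Y S T (phi : Hom X Y) (i : Hom S X) (j : Hom T X) :
  subeq i j -> subeq (comp phi i) (comp phi j).
Proof. by case=> ij ji; split; apply: suble_comp. Qed.

Lemma suble_kmapP A B (f : Hom A B) X (g : Hom X A) :
  suble g (kmap f) <-> comp f g = 0.
Proof.
split=> [[h <-] | /kmap_lift[h kh]]; last by exists h.
by rewrite compA kmap0 comp0l.
Qed.

Lemma mono_lift A B (f : Hom A B) X (g : Hom X B) :
  mono f -> comp (ckmap f) g = 0 -> suble g f.
Proof. by move=> mf /(mono_normal mf)[h fh]; exists h. Qed.

End Subobjects.

Section Images.
Variable C : AbCat.
Local Notation Hom := (Hom C).

Lemma immap_mono X Y (g : Hom Y X) : mono (immap g).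
Proof. exact: kmap_mono. Qed.

Lemma image_factor X Y (g : Hom Y X) :
  exists e : Hom Y (imob g), comp (immap g) e = g /\ epi e.
Proof.
case: (kmap_lift (ckmap0 g)) => e ge; exists e; split=> //.
apply/epiP => Z a ae0.
case: (kmap_lift ae0) => e' ke'.
pose j := comp (immap g) (kmap a).
have mj : mono j by apply: mono_comp; apply: kmap_mono.
have je' : comp j e' = g by rewrite -compA ke' ge.
have : comp (ckmap j) g = 0 by rewrite -[X in comp _ X = _]je' compA ckmap0 comp0l.
case/ckmap_desc => h hj.
have /(mono_lift mj)[f jf] : comp (ckmap j) (immap g) = 0.
  by rewrite -hj -compA /immap kmap0 comp0r.
have kf : comp (kmap a) f = idm _.
  by apply: (immap_mono (g:=g)); rewrite compm1 compA.
by rewrite -[a]compm1 -kf compA kmap0 comp0l.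
Qed.

Lemma sub_im X Y (g : Hom Y X) : suble g (immap g).
Proof. by case: (image_factor g) => e [ge _]; exists e. Qed.

Lemma im_least X Y T (g : Hom Y X) (j : Hom T X) :
  mono j -> suble g j -> suble (immap g) j.
Proof.
move=> mj [f jf]; apply: mono_lift => //.
have : comp (ckmap j) g = 0 by rewrite -jf compA ckmap0 comp0l.
by case/ckmap_desc=> h <-; rewrite -compA /immap kmap0 comp0r.
Qed.

Lemma im_mon X Y Y' (g : Hom Y X) (h : Hom Y' X) :
  suble g h -> suble (immap g) (immap h).
Proof.
move=> gh; apply: im_least; first exact: immap_mono.
exact: suble_trans gh (sub_im h).
Qed.

Lemma im_subeq X Y Y' (g : Hom Y X) (h : Hom Y' X) :
  subeq g h -> subeq (immap g) (immap h).
Proof. by case=> gh hg; split; apply: im_mon. Qed.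

Lemma mono_im X S (i : Hom S X) : mono i -> subeq i (immap i).
Proof. by move=> mi; split; [apply: sub_im | apply: im_least; last apply: suble_refl]. Qed.

Lemma epi_im X Y Z W (n : Hom Y X) (q : Hom Z Y) (h : Hom W X) :
  epi q -> suble (comp n q) h -> suble n (immap h).
Proof.
move=> eq [f hf]; case: (image_factor h) => e [he _].
apply: mono_lift; first exact: immap_mono.
have nq : comp n q = comp (immap h) (comp e f) by rewrite compA he hf.
by apply: (epiP q).1 => //; rewrite -compA nq compA ckmap0 comp0l.
Qed.

Lemma im_comp_im X Z W (phi : Hom X Z) (g : Hom W X) :
  subeq (immap (comp phi (immap g))) (immap (comp phi g)).
Proof.
split; last exact: im_mon (suble_comp _ (sub_im g)).
apply: im_least; first exact: immap_mono.
case: (image_factor g) => e [ge ee].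
by apply: (epi_im ee); exists (idm _); rewrite compm1 -compA ge.
Qed.

Lemma dim_subeq X Y S T (phi : Hom X Y) (i : Hom S X) (j : Hom T X) :
  subeq i j -> subeq (dimmap phi i) (dimmap phi j).
Proof. by move=> ij; apply/im_subeq/subeq_comp. Qed.

End Images.

Section Kernels.
Variable C : AbCat.
Local Notation Hom := (Hom C).

Lemma coimage_factor X N (q : Hom X N) :
  exists h : Hom (coimob q) N, comp h (coimmap q) = q /\ mono h.
Proof. exact: (image_factor (C:=opC C)). Qed.

Lemma ker_coim X Y (g : Hom X Y) : subeq (kmap (coimmap g)) (kmap g).
Proof. exact/subeq_sym/mono_im/kmap_mono. Qed.

Lemma ker_mono A B D (u : Hom B D) (f : Hom A B) :
  mono u -> subeq (kmap (comp u f)) (kmap f).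
Proof.
move=> mu; split; apply/suble_kmapP; last by rewrite -compA kmap0 comp0r.
by apply: (monoP u).1 => //; rewrite compA kmap0.
Qed.

Lemma inv_le X Y S T (phi : Hom X Y) (i : Hom S Y) (j : Hom T Y) :
  suble i j -> suble (invmap phi i) (invmap phi j).
Proof.
case=> a ja; apply/suble_kmapP.
have : comp (ckmap j) i = 0 by rewrite -ja compA ckmap0 comp0l.
case/ckmap_desc=> h hi.
have -> : comp (ckmap j) phi = comp h (comp (ckmap i) phi) by rewrite compA hi.
by rewrite -compA /invmap kmap0 comp0r.
Qed.

Lemma inv_subeq X Y S T (phi : Hom X Y) (i : Hom S Y) (j : Hom T Y) :
  subeq i j -> subeq (invmap phi i) (invmap phi j).
Proof. by case=> ij ji; split; apply: inv_le. Qed.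

(* The kernel of the quotient "image of M^m -> M^k -> N" is the inverse image
   of ker (M^k ->> N): this is the kernel of the second construction of C'. *)
Lemma ker_coimage_comp X Y N (q : Hom Y N) (phi : Hom X Y) :
  subeq (kmap (coimmap (comp q phi))) (invmap phi (kmap q)).
Proof.
apply: subeq_trans (ker_coim _) _.
case: (coimage_factor q) => h [hq mh].
have -> : comp q phi = comp h (comp (coimmap q) phi) by rewrite compA hq.
exact: ker_mono.
Qed.

(* The pullback of an epimorphism along any morphism is an epimorphism
   (realized as a kernel of w pr1 - e pr2 : Z (+) A -> B). *)
Lemma pullback_epi A B Z (e : Hom A B) (w : Hom Z B) : epi e ->
  exists W (p : Hom W Z) (t : Hom W A), epi p /\ comp e t = comp w p.
Proof.
move=> ee.
pose d : Hom (bip Z A) B := comp w bpr1 - comp e bpr2.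
have db2 : comp d bin2 = - e by rewrite /d; hom_simp.
have ed : epi d.
  apply/epiP => X b bd.
  have : comp b e = 0 by apply/eqP; rewrite -oppr_eq0 -compNr -db2 compA bd comp0l.
  exact: (epiP _).1 ee _ _.
exists (kerob d), (comp bpr1 (kmap d)), (comp bpr2 (kmap d)); split.
  apply/epiP => X a ak.
  have : comp (comp a bpr1) (kmap d) = 0 by rewrite -compA.
  case/(epi_normal ed) => h hd.
  have /((epiP _).1 ee) h0 : comp h e = 0.
    by apply/eqP; rewrite -oppr_eq0 -compNr -db2 compA hd; hom_simp.
  by rewrite -[a]compm1 -(bip11 Z A) compA -hd h0 !comp0l.
have := kmap0 d; rewrite /d compBl => /eqP; rewrite subr_eq0 => /eqP.
by rewrite -!compA.
Qed.

(* The kernel of Y -> Y \sqcup_X N is the direct image phi(ker q): this is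
   the kernel of the third construction of C'. *)
Lemma ker_pomap X Y N (phi : Hom X Y) (q : Hom X N) :
  subeq (kmap (pomap phi q)) (dimmap phi (kmap q)).
Proof.
pose d : Hom X (bip Y N) := comp bin1 phi - comp bin2 q.
have dphi : comp (ckmap d) (comp bin1 phi) = comp (ckmap d) (comp bin2 q).
  by apply/eqP; rewrite -subr_eq0 -compBr ckmap0.
rewrite /pomap -/d; split; last first.
  apply: im_least; first exact: kmap_mono.
  apply/suble_kmapP.
  by rewrite compA -[comp (comp _ bin1) phi]compA dphi -!compA kmap0 !comp0r.
move: (kmap0 (comp (ckmap d) bin1)); move: (kmap _) => z dz.
have /kmap_lift[w dw] : comp (ckmap d) (comp bin1 z) = 0 by rewrite compA.
case: (image_factor d) => e [de ee].
case: (pullback_epi w ee) => W [p [t [ep et]]].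
have H : comp bin1 (comp z p) = comp d t.
  by rewrite compA -dw -compA -et compA de.
have := congr1 (comp bpr1) H; have := congr1 (comp bpr2) H.
rewrite /d; hom_simp => /eqP; rewrite eq_sym oppr_eq0 => /eqP qt zp.
case: (kmap_lift qt) => t' kt'.
by apply: (epi_im ep); exists t'; rewrite -compA kt' zp.
Qed.

End Kernels.

Section Retracts.
Variable C : AbCat.
Local Notation Ob := (Ob C).
Local Notation Hom := (Hom C).

Definition retract (X Y : Ob) := exists (s : Hom X Y) (r : Hom Y X), comp r s = idm X.

Lemma retract_refl X : retract X X.
Proof. by exists (idm X), (idm X); rewrite compm1. Qed.

Lemma retract_trans X Y Z : retract X Y -> retract Y Z -> retract X Z.
Proof.
case=> s [r rs] [s' [r' rs']]; exists (comp s' s), (comp r r').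
by rewrite compA -[comp (comp r r') s']compA rs' compm1 rs.
Qed.

Lemma retract_bip A B A' B' :
  retract A A' -> retract B B' -> retract (bip A B) (bip A' B').
Proof.
case=> s1 [r1 rs1] [s2 [r2 rs2]].
have rs1c Z (h : Hom A Z) : comp (comp h r1) s1 = h by rewrite -compA rs1 compm1.
have rs2c Z (h : Hom B Z) : comp (comp h r2) s2 = h by rewrite -compA rs2 compm1.
exists (comp (comp bin1 s1) bpr1 + comp (comp bin2 s2) bpr2).
exists (comp (comp bin1 r1) bpr1 + comp (comp bin2 r2) bpr2).
by apply: bip_ext_from; hom_simp; rewrite ?rs1c ?rs2c; hom_simp.
Qed.

Lemma retract_assoc A B D : retract (bip (bip A B) D) (bip A (bip B D)).
Proof.
exists (comp (comp bin1 bpr1) bpr1 +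
        comp bin2 (comp (comp bin1 bpr2) bpr1 + comp bin2 bpr2)).
exists (comp bin1 (comp bin1 bpr1 + comp (comp bin2 bpr1) bpr2) +
        comp (comp bin2 bpr2) bpr2).
by apply: bip_ext_from; [apply: bip_ext_from|]; hom_simp.
Qed.

Lemma retract_zob X : retract (bip zob X) X.
Proof.
exists bpr2, bin2; apply: bip_ext_from; hom_simp => //.
by rewrite (zob_init bin1 0).
Qed.

Lemma retract_pow M a b : retract (bip (pow M a) (pow M b)) (pow M (a + b)).
Proof.
elim: a => [|a IH]; first exact: retract_zob.
apply: retract_trans (retract_assoc _ _ _) _.
exact: retract_bip (retract_refl _) IH.
Qed.

Lemma dimker_retract P P' Q Q' X (a : Hom P X) (b : Hom P Q) :
  retract P P' -> retract Q Q' ->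
  exists (a' : Hom P' X) (b' : Hom P' Q'),
    subeq (dimmap a (kmap b)) (dimmap a' (kmap b')).
Proof.
case=> sP [rP rsP] [sQ [rQ rsQ]].
have rsPc Z (f : Hom Z P) : comp rP (comp sP f) = f by rewrite compA rsP comp1m.
have msQ : mono sQ.
  by move=> Z g h e; rewrite -[g]comp1m -[h]comp1m -rsQ -!compA e.
exists (comp a rP), (comp (comp sQ b) rP); apply: im_subeq; split.
  have /kmap_lift[f kf] : comp (comp (comp sQ b) rP) (comp sP (kmap b)) = 0.
    by rewrite -!compA rsPc kmap0 comp0r.
  by exists f; rewrite -!compA kf rsPc.
have /kmap_lift[f kf] : comp b (comp rP (kmap (comp (comp sQ b) rP))) = 0.
  by apply: (monoP sQ).1 => //; rewrite !compA kmap0.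
by exists f; rewrite -[LHS]compA kf compA.
Qed.

End Retracts.

Section InverseImage.
Variable C : AbCat.
Local Notation Hom := (Hom C).

Lemma inv_dimker X Y K L (phi : Hom X Y) (alpha : Hom K Y) (beta : Hom K L)
    (gam : Hom (bip X K) (bip Y L)) :
  comp bpr1 gam = comp phi bpr1 - comp alpha bpr2 ->
  comp bpr2 gam = comp beta bpr2 ->
  subeq (invmap phi (dimmap alpha (kmap beta))) (dimmap bpr1 (kmap gam)).
Proof.
move=> gam1 gam2.
set g := comp alpha (kmap beta); case: (image_factor g) => e [ge ee].
have gk := kmap0 gam.
have := congr1 (comp bpr1) gk; have := congr1 (comp bpr2) gk.
rewrite !compA gam1 gam2 !comp0r compBl => /eqP beta_k /eqP phi_k.
have {}phi_k : comp phi (comp bpr1 (kmap gam)) = comp alpha (comp bpr2 (kmap gam)).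
  by apply/eqP; rewrite -subr_eq0 !compA.
have {beta_k}/kmap_lift[u ku] : comp beta (comp bpr2 (kmap gam)) = 0.
  by rewrite compA; apply/eqP.
split; last first.
  apply: im_least; first exact: kmap_mono.
  apply/suble_kmapP.
  have gu : comp alpha (comp (kmap beta) u) = comp (immap g) (comp e u).
    by rewrite [RHS]compA ge compA.
  by rewrite -compA phi_k -ku gu compA ckmap0 comp0l.
set n := invmap phi (immap g).
have /(mono_lift (immap_mono (g:=g)))[s gs] : comp (ckmap (immap g)) (comp phi n) = 0.
  by rewrite compA; apply: kmap0.
case: (pullback_epi s ee) => W [p [t [ep et]]].
pose w : Hom W (bip X K) := comp bin1 (comp n p) + comp bin2 (comp (kmap beta) t).
have w1 : comp bpr1 w = comp n p by rewrite /w; hom_simp.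
have w2 : comp bpr2 w = comp (kmap beta) t by rewrite /w; hom_simp.
have phi_w : comp phi (comp n p) = comp alpha (comp (kmap beta) t).
  by rewrite compA -gs -compA -et compA ge compA.
have /kmap_lift[w' kw'] : comp gam w = 0.
  apply: bip_ext_into; rewrite comp0r compA ?gam1 ?gam2 ?compBl -!compA ?w1 ?w2.
    by rewrite phi_w subrr.
  by rewrite compA kmap0 comp0l.
by apply: (epi_im ep); exists w'; rewrite -compA kw' w1.
Qed.

End InverseImage.

Section LeftConditions.
Variable C : AbCat.
Local Notation Ob := (Ob C).
Local Notation Hom := (Hom C).
Variable M : Ob.

Definition dimker_form m S (i : Hom S (pow M m)) :=
  exists k l (alpha : Hom (pow M k) (pow M m)) (beta : Hom (pow M k) (pow M l)),
    subeq i (dimmap alpha (kmap beta)).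

Lemma dimker_form_subeq m S T (i : Hom S (pow M m)) (j : Hom T (pow M m)) :
  subeq i j -> dimker_form j -> dimker_form i.
Proof. by move=> ij [k [l [a [b jab]]]]; exists k, l, a, b; apply: subeq_trans ij jab. Qed.

Lemma dimker_form_zero m : dimker_form (0 : Hom zob (pow M m)).
Proof.
exists 0%N, 0%N, 0, 0; apply: subeq_trans (mono_im _) (im_subeq _).
  by move=> Z g h _; apply: zob_term.
by rewrite comp0l; split; exists 0; rewrite comp0r.
Qed.

Lemma dimker_form_top m : dimker_form (idm (pow M m)).
Proof.
exists m, 0%N, (idm _), 0; apply: subeq_trans (mono_im _) (im_subeq _).
  by move=> Z g h; rewrite !comp1m.
rewrite comp1m; split; last by exists (kmap 0); rewrite comp1m.
by apply/suble_kmapP; rewrite comp0l.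
Qed.

(* phi(alpha(ker beta)) = (phi alpha)(ker beta). *)
Lemma dimker_form_img m k S (i : Hom S (pow M m)) (phi : Hom (pow M m) (pow M k)) :
  dimker_form i -> dimker_form (dimmap phi i).
Proof.
case=> k' [l [a [b iab]]]; exists k', l, (comp phi a), b.
apply: subeq_trans (dim_subeq phi iab) _.
by rewrite /dimmap -compA; apply: im_comp_im.
Qed.

(* phi^-1(alpha(ker beta)) = pr1(ker gam), moved to powers of M. *)
Lemma dimker_form_inv m k S (i : Hom S (pow M k)) (phi : Hom (pow M m) (pow M k)) :
  dimker_form i -> dimker_form (invmap phi i).
Proof.
case=> k' [l [a [b iab]]].
pose gam : Hom (bip (pow M m) (pow M k')) (bip (pow M k) (pow M l)) :=
  comp bin1 (comp phi bpr1 - comp a bpr2) + comp bin2 (comp b bpr2).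
have inv_gam : subeq (invmap phi (dimmap a (kmap b))) (dimmap bpr1 (kmap gam)).
  by apply: inv_dimker; rewrite /gam; hom_simp.
have [a' [b' gam_ab']] := dimker_retract bpr1 gam (retract_pow M m k') (retract_pow M k l).
exists (m + k')%N, (k + l)%N, a', b'.
exact: subeq_trans (inv_subeq phi iab) (subeq_trans inv_gam gam_ab').
Qed.

Lemma classC_dimker_form m S (i : Hom S (pow M m)) : classC i -> dimker_form i.
Proof.
elim=> {m S i} [m | m | m k S i phi _ | m k S i phi _].
- exact: dimker_form_zero.
- exact: dimker_form_top.
- exact: dimker_form_img.
- exact: dimker_form_inv.
Qed.

Lemma ckmap0_mono A B : mono (ckmap (0 : Hom A B)).
Proof.
have /ckmap_desc[r r0] : comp (idm B) (0 : Hom A B) = 0 by rewrite comp0r.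
by move=> X g h e; rewrite -[g]comp1m -[h]comp1m -r0 -!compA e.
Qed.

(* alpha(ker beta) = alpha(beta^-1(0)) lies in C; conversely members of C are
   of this form. *)
Theorem P1_iff_P2_left : P1_left M <-> P2_left M.
Proof.
split=> [P1 n S i mi | P2 m S i mi].
  case: (P1 n S i mi) => k [l [a [b iab]]].
  exists (dimob a (invmap b (0 : Hom zob (pow M l)))), (dimmap a (invmap b 0)).
  split; first exact/classC_img/classC_inv/classC_zero.
  apply: subeq_trans iab (dim_subeq _ _).
  exact/subeq_sym/ker_mono/ckmap0_mono.
case: (P2 m S i mi) => S' [i' [ci ii']].
exact: dimker_form_subeq ii' (classC_dimker_form ci).
Qed.

End LeftConditions.

Section KernelClass.
Variable C : AbCat.
Local Notation Ob := (Ob C).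
Local Notation Hom := (Hom C).
Variable M : Ob.

Definition ker_in_classC m N (q : Hom (pow M m) N) :=
  exists S (i : Hom S (pow M m)), classC i /\ subeq (kmap q) i.

Lemma ker_id_zero (A : Ob) : subeq (kmap (idm A)) (0 : Hom zob A).
Proof.
split; last by apply/suble_kmapP; rewrite comp0r.
by exists 0; rewrite comp0l -[kmap _]comp1m kmap0.
Qed.

Lemma ker_zero_id (A : Ob) : subeq (kmap (0 : Hom A zob)) (idm A).
Proof.
split; first by exists (kmap 0); rewrite comp1m.
by apply/suble_kmapP; rewrite comp0l.
Qed.

Lemma classC'_ker m N (q : Hom (pow M m) N) : classC' q -> ker_in_classC q.
Proof.
elim=> {m N q} [m | m | m k N q phi _ [S [i [ci qi]]] | m k N q phi _ [S [i [ci qi]]]].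
- by exists (pow M m), (idm _); split; [apply: classC_top | apply: ker_zero_id].
- by exists zob, 0; split; [apply: classC_zero | apply: ker_id_zero].
- exists (invob phi i), (invmap phi i); split; first exact: classC_inv.
  exact: subeq_trans (ker_coimage_comp _ _) (inv_subeq _ qi).
- exists (dimob phi i), (dimmap phi i); split; first exact: classC_img.
  exact: subeq_trans (ker_pomap _ _) (dim_subeq _ qi).
Qed.

Lemma classC_ker' m S (i : Hom S (pow M m)) : classC i ->
  exists N (q : Hom (pow M m) N), classC' q /\ subeq (kmap q) i.
Proof.
elim=> {m S i} [m | m | m k S i phi _ [N [q [cq qi]]] | m k S i phi _ [N [q [cq qi]]]].
- by exists (pow M m), (idm _); split; [apply: classC'_id | apply: ker_id_zero].
- by exists zob, 0; split; [apply: classC'_zero | apply: ker_zero_id].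
- exists (poob phi q), (pomap phi q); split; first exact: classC'_po.
  exact: subeq_trans (ker_pomap _ _) (dim_subeq _ qi).
- exists (coimob (comp q phi)), (coimmap (comp q phi)); split; first exact: classC'_comp.
  exact: subeq_trans (ker_coimage_comp _ _) (inv_subeq _ qi).
Qed.

(* In the opposite category, the class C consists of quotients of powers of M;
   such a quotient also has its kernel in C ... *)
Lemma classC_op_ker m N (q : Hom (pow M m) N) :
  classC (C:=opC C) (M:=M) q -> ker_in_classC q.
Proof.
elim=> {m N q} [m | m | m k S q phi _ [T [i [ci qi]]] | m k S q phi _ [T [i [ci qi]]]].
- by exists (pow M m), (idm _); split; [apply: classC_top | apply: ker_zero_id].
- by exists zob, 0; split; [apply: classC_zero | apply: ker_id_zero].
- change (Hom (pow M k) (pow M m) : Type) in phi.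
  exists (invob phi i), (invmap phi i); split; first exact: classC_inv.
  exact: subeq_trans (ker_coimage_comp _ _) (inv_subeq _ qi).
- change (Hom (pow M k) (pow M m) : Type) in phi.
  exists (dimob phi i), (dimmap phi i); split; first exact: classC_img.
  exact: dim_subeq qi.
Qed.

Lemma classC_ker_op m S (i : Hom S (pow M m)) : classC i ->
  exists N (q : Hom (pow M m) N), classC (C:=opC C) (M:=M) q /\ subeq (kmap q) i.
Proof.
elim=> {m S i} [m | m | m k S i phi _ [N [q [cq qi]]] | m k S i phi _ [N [q [cq qi]]]].
- by exists (pow M m), (idm _); split; [apply: (classC_top (C:=opC C)) | apply: ker_id_zero].
- by exists zob, 0; split; [apply: (classC_zero (C:=opC C)) | apply: ker_zero_id].
- exists (cokob (comp phi (kmap q))), (ckmap (comp phi (kmap q))); split.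
    exact: (classC_inv (C:=opC C)).
  exact: dim_subeq qi.
- exists (coimob (comp q phi)), (coimmap (comp q phi)); split.
    exact: (classC_img (C:=opC C)).
  exact: subeq_trans (ker_coimage_comp _ _) (inv_subeq _ qi).
Qed.

Lemma classC_op_epi m N (q : Hom (pow M m) N) : classC (C:=opC C) (M:=M) q -> epi q.
Proof.
case=> {m N q} [m X g h _ | m X g h | m k S i phi _ | m k S i phi _].
- exact: zob_init.
- by rewrite !compm1.
- exact: ckmap_epi.
- exact: ckmap_epi.
Qed.

Lemma op_suble_ker X N N' (q : Hom X N) (q' : Hom X N') :
  suble (C:=opC C) q q' -> suble (kmap q') (kmap q).
Proof. by case=> f /= <-; apply/suble_kmapP; rewrite -compA kmap0 comp0r. Qed.

Lemma ker_op_suble X N N' (q : Hom X N) (q' : Hom X N') :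
  epi q' -> suble (kmap q') (kmap q) -> suble (C:=opC C) q q'.
Proof. by move=> eq' /suble_kmapP/(epi_normal eq')[h hq]; exists h. Qed.

Lemma op_subeq_ker X N N' (q : Hom X N) (q' : Hom X N') :
  subeq (C:=opC C) q q' -> subeq (kmap q) (kmap q').
Proof. by case=> qq' q'q; split; apply: op_suble_ker. Qed.

Lemma ker_op_subeq X N N' (q : Hom X N) (q' : Hom X N') :
  epi q -> epi q' -> subeq (kmap q) (kmap q') -> subeq (C:=opC C) q q'.
Proof. by move=> eq eq' [qq' q'q]; split; apply: ker_op_suble. Qed.

(* All three P2-type conditions say: every quotient of a power of M has its
   kernel in C. *)
Definition kernels_in_classC :=
  forall n N (q : Hom (pow M n) N), epi q -> ker_in_classC q.

Lemma P2_left_kernels : P2_left M <-> kernels_in_classC.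
Proof.
split=> [P2 n N q _ | K n S i mi].
  by case: (P2 n _ (kmap q) (kmap_mono (f:=q))) => S' [i' [ci qi]]; exists S', i'.
case: (K n _ (ckmap i) (ckmap_epi (f:=i))) => S' [i' [ci ii']]; exists S', i'.
by split=> //; apply: subeq_trans (mono_im mi) ii'.
Qed.

Lemma P2_right_kernels : P2_right M <-> kernels_in_classC.
Proof.
split=> [P2 n N q eq | K n N q eq].
  case: (P2 n N q eq) => N' [q' [cq qq']].
  case: (classC'_ker cq) => S [i [ci q'i]].
  by exists S, i; split=> //; apply: subeq_trans qq' q'i.
case: (K n N q eq) => S [i [ci qi]].
case: (classC_ker' ci) => N' [q' [cq q'i]].
by exists N', q'; split=> //; apply: subeq_trans qi (subeq_sym q'i).
Qed.

Lemma P2_left_op_kernels : P2_left (C:=opC C) M <-> kernels_in_classC.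
Proof.
split=> [P2 n N q eq | K n N q eq].
  case: (P2 n N q eq) => N' [q' [cq qq']].
  case: (classC_op_ker cq) => S [i [ci q'i]].
  by exists S, i; split=> //; apply: subeq_trans (op_subeq_ker qq') q'i.
case: (K n N q eq) => S [i [ci qi]].
case: (classC_ker_op ci) => N' [q' [cq q'i]].
exists N', q'; split=> //; apply: ker_op_subeq (classC_op_epi cq) _ => //.
exact: subeq_trans qi (subeq_sym q'i).
Qed.

Lemma P1_right_op : P1_right M <-> P1_left (C:=opC C) M.
Proof.
split=> [P1 m N q eq | P1 m N q eq].
  case: (P1 m N q eq) => k [l [a [b qab]]]; exists k, l, a, b.
  change (subeq (C:=opC C) q (coimmap (comp (ckmap b) a))).
  apply: ker_op_subeq eq (ckmap_epi (f:=kmap _)) _.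
  exact: subeq_trans qab (subeq_sym (ker_coim _)).
case: (P1 m N q eq) => k [l [a [b qab]]]; exists k, l, a, b.
exact: subeq_trans (op_subeq_ker qab) (ker_coim _).
Qed.

End KernelClass.

Theorem mainTheorem9 (C : AbCat) (M : Ob C) :
  (P1_left M <-> P2_left M) /\ (P2_left M <-> P1_right M) /\
  (P1_right M <-> P2_right M).
Proof.
have P1P2_left := P1_iff_P2_left M.
have P1P2_left_op := P1_iff_P2_left (C:=opC C) M.
have P2_left_ker := P2_left_kernels M.
have P2_right_ker := P2_right_kernels M.
have P2_left_op_ker := P2_left_op_kernels M.
have P1_right_opp := P1_right_op M.
tauto.
Qed.
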